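(* Let $q_1,q_2$ be coprime positive integers, $Q=q_1q_2$, let $V:\mathbb{Z}^2\to\mathbb{R}$ be $(q_1,q_2)$-periodic, and let $\lambda_*\in\mathbb{C}$. Let $N\subset\mathbb{R}^2$ be the quadrilateral with vertices $(q_2,0)$, $(0,q_1)$, $(-q_2,0)$, $(0,-q_1)$. Then $N$ contains every exponent vector of the Laurent polynomial $z_1\frac{\partial}{\partial z_1}\mathcal{P}(z,\lambda_* )$.
   Context: $V$ is $(q_1,q_2)$-periodic if $V(n_1,n_2)=V(n_1+q_1,n_2)=V(n_1,n_2+q_2)$ for all $(n_1,n_2)\in\mathbb{Z}^2$. The operator $\Delta+V$ acts on $u:\mathbb{Z}^2\to\mathbb{C}$ by $((\Delta+V)u)(n)=u(n_1+1,n_2)+u(n_1-1,n_2)+u(n_1,n_2+1)+u(n_1,n_2-1)+V(n)u(n)$. For $z=(z_1,z_2)\in(\mathbb{C}\setminus\{0\})^2$, $\mathcal{D}_V(z)$ is the $Q\times Q$ matrix of $\Delta+V$ acting on the space of functions $u$ with $u(n_1+q_1,n_2)=z_1u(n)$ and $u(n_1,n_2+q_2)=z_2u(n)$ for all $n$, in the coordinates $\{u(n_1,n_2):1\le n_1\le q_1,1\le n_2\le q_2\}$, and $\mathcal{P}(z,\lambda)=\det(\mathcal{D}_V(z)-\lambda I)$, a Laurent polynomial in $z$. An exponent vector of a Laurent polynomial $\sum_i c_iz^{e_i}$ is an $e_i\in\mathbb{Z}^2$ with $c_i\neq 0$. *)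

From HB Require Import structures.
From mathcomp Require Import all_boot all_order all_algebra.
From mathcomp Require Import complex.
From mathcomp Require Import reals.
Set Implicit Arguments. Unset Strict Implicit. Unset Printing Implicit Defensive.
Import Order.TTheory GRing.Theory Num.Theory.
Local Open Scope ring_scope.
Local Open Scope complex_scope.

(* A point of the fundamental domain {1..q1} x {1..q2} is encoded by
   k : 'I_(q1*q2) with n1 = k %/ q2 + 1 and n2 = k %% q2 + 1.
   Bivariate polynomials in z1, z2 are elements of {poly {poly C}}:
   the outer variable is z1 ('X), the inner one is z2 ('X%:P);
   p`_i`_j is the coefficient of z1^i z2^j. *)

Section Floquet.
Variable R : realType.
Local Notation C := (R[i]).
Variables (q1 q2 : nat) (V : int -> int -> R) (lam : C).

Definition crd1 (k : nat) : nat := (k %/ q2)%N.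
Definition crd2 (k : nat) : nat := (k %% q2)%N.

Definition pz1 : {poly {poly C}} := 'X.
Definition pz2 : {poly {poly C}} := ('X)%:P.
Definition pcst (c : C) : {poly {poly C}} := c%:P%:P.

(* Entry (k,l) of  z1 z2 (D_V(z) - lam I), which has polynomial entries. *)
Definition scaled_entry (k l : 'I_(q1 * q2)) : {poly {poly C}} :=
  let a := crd1 k in let b := crd2 k in
  let a' := crd1 l in let b' := crd2 l in
  (if k == l then pcst ((V (Posz a.+1) (Posz b.+1))%:C - lam) * pz1 * pz2 else 0)
  + (if (b' == b) && (a' == (a.+1 %% q1)%N)
     then (if a.+1 == q1 then pz1 * pz1 * pz2 else pz1 * pz2) else 0)
  + (if (b' == b) && (a' == ((a + q1).-1 %% q1)%N)
     then (if a == 0%N then pz2 else pz1 * pz2) else 0)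
  + (if (a' == a) && (b' == (b.+1 %% q2)%N)
     then (if b.+1 == q2 then pz1 * pz2 * pz2 else pz1 * pz2) else 0)
  + (if (a' == a) && (b' == ((b + q2).-1 %% q2)%N)
     then (if b == 0%N then pz1 else pz1 * pz2) else 0).

Definition scaled_mx : 'M[{poly {poly C}}]_(q1 * q2) :=
  \matrix_(k, l) scaled_entry k l.

(* (z1 z2)^Q * P(z, lam) as an honest polynomial in z1, z2. *)
Definition shiftedP : {poly {poly C}} := \det scaled_mx.

Definition Pcoef (e1 e2 : int) : C :=
  let Q := (q1 * q2)%N in
  if (0 <= e1 + Q%:Z) && (0 <= e2 + Q%:Z)
  then (shiftedP)`_(absz (e1 + Q%:Z))`_(absz (e2 + Q%:Z))
  else 0.

Definition z1dPcoef (e1 e2 : int) : C := e1%:~R * Pcoef e1 e2.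

End Floquet.

Definition periodic (q1 q2 : nat) (R : Type) (V : int -> int -> R) : Prop :=
  forall n1 n2 : int, V n1 n2 = V (n1 + q1%:Z)%R n2 /\ V n1 n2 = V n1 (n2 + q2%:Z)%R.

(* Exponent vector e lies in the quadrilateral with vertices
   (q2,0),(0,q1),(-q2,0),(0,-q1), i.e. |e1|/q2 + |e2|/q1 <= 1. *)
Definition in_N (q1 q2 : nat) (e1 e2 : int) : Prop :=
  (q1 * `|e1| + q2 * `|e2| <= q1 * q2)%N.

From HB Require Import structures.
From mathcomp Require Import all_boot all_order all_algebra.
From mathcomp Require Import complex reals.
From mathcomp Require Import perm zify ring.
Set Implicit Arguments. Unset Strict Implicit. Unset Printing Implicit Defensive.
Import Order.TTheory GRing.Theory Num.Theory.
Local Open Scope ring_scope.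

(* Give z1 and z2 the weights s1 q1 and s2 q2, for signs s1, s2 = +-1.  The entries of
   z1 z2 (D_V(z) - lam) are monomials, and the weight of entry (k, l) exceeds that of the
   diagonal monomial z1 z2 by at most 1 + w(k) - w(l), where w(n) = s1 n1 + s2 n2 is the
   weight of the site n.  The potential w cancels along every permutation, so every
   monomial of (z1 z2)^Q P(z, lam) has weight at most Q (s1 q1 + s2 q2 + 1); shifting back,
   every exponent vector e of P satisfies s1 q1 e1 + s2 q2 e2 <= Q.  The four sign choices
   cut out N, and z1 d/dz1 only multiplies the coefficient of z^e by e1. *)

Section WeightedDegree.
Variable K : nzRingType.
Implicit Types (a b B : int) (p q : {poly {poly K}}).

Definition wdeg_le a b p B :=
  forall i j : nat, p`_i`_j != 0 -> a * i%:Z + b * j%:Z <= B.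

Lemma wdeg_le0 a b B : wdeg_le a b 0 B.
Proof. by move=> i j; rewrite !coef0 eqxx. Qed.

Lemma wdeg_leW a b p B B' : B <= B' -> wdeg_le a b p B -> wdeg_le a b p B'.
Proof. by move=> leBB' hp i j /hp /le_trans; apply. Qed.

Lemma wdeg_leD a b p q B : wdeg_le a b p B -> wdeg_le a b q B -> wdeg_le a b (p + q) B.
Proof.
move=> hp hq i j; rewrite !coefD.
by have [/hp //|/negPn/eqP->] := boolP (p`_i`_j != 0); rewrite add0r => /hq.
Qed.

Lemma wdeg_leN a b p B : wdeg_le a b p B -> wdeg_le a b (- p) B.
Proof. by move=> hp i j; rewrite !coefN oppr_eq0 => /hp. Qed.

Lemma wdeg_leM a b p q Bp Bq :
  wdeg_le a b p Bp -> wdeg_le a b q Bq -> wdeg_le a b (p * q) (Bp + Bq).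
Proof.
move=> hp hq i j; apply: contraTT; rewrite -ltNge negbK => ltB; apply/eqP.
rewrite coefM coef_sum big1 // => k _; rewrite coefM big1 // => m _.
have [/hp hkm|/negPn/eqP->] := boolP (p`_k`_m != 0); last by rewrite mul0r.
have [/hq|/negPn/eqP->] := boolP (q`_(i - k)`_(j - m) != 0); last by rewrite mulr0.
rewrite -!subzn ?leq_ord // => hij; move: ltB; rewrite ltNge => /negP[].
have -> : a * i%:Z + b * j%:Z =
          (a * k%:Z + b * m%:Z) + (a * (i%:Z - k%:Z) + b * (j%:Z - m%:Z)) by ring.
exact: lerD.
Qed.

Lemma wdeg_leC a b (c : K) : wdeg_le a b c%:P%:P 0.
Proof.
move=> i j; rewrite coefC; have [->|] := eqVneq i 0%N; last by rewrite coef0 eqxx.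
by rewrite coefC; have [->|] := eqVneq j 0%N; rewrite ?eqxx // !mulr0 addr0.
Qed.

Lemma wdeg_le1 a b : wdeg_le a b 1 0.
Proof. exact: wdeg_leC. Qed.

Lemma wdeg_leX a b : wdeg_le a b 'X a.
Proof.
move=> i j; rewrite coefX; have [->|] := eqVneq i 1%N; last by rewrite coef0 eqxx.
by rewrite coef1; have [->|] := eqVneq j 0%N; rewrite ?eqxx // mulr0 mulr1 addr0.
Qed.

Lemma wdeg_leY a b : wdeg_le a b 'Y b.
Proof.
move=> i j; rewrite coefC; have [->|] := eqVneq i 0%N; last by rewrite coef0 eqxx.
by rewrite coefX; have [->|] := eqVneq j 1%N; rewrite ?eqxx // mulr0 mulr1 add0r.
Qed.

Lemma wdeg_le_prod a b (I : Type) (r : seq I) (F : I -> {poly {poly K}}) (BF : I -> int) :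
  (forall x, wdeg_le a b (F x) (BF x)) ->
  wdeg_le a b (\prod_(x <- r) F x) (\sum_(x <- r) BF x).
Proof.
move=> hF; elim: r => [|x r IHr]; first by rewrite !big_nil; apply: wdeg_le1.
by rewrite !big_cons; apply: wdeg_leM.
Qed.

Lemma wdeg_le_det a b n (A : 'M[{poly {poly K}}]_n) (phi : 'I_n -> int) c :
  (forall k l, wdeg_le a b (A k l) (c + phi k - phi l)) ->
  wdeg_le a b (\det A) (c *+ n).
Proof.
move=> hA; apply: (big_ind (wdeg_le a b ^~ (c *+ n))) => [|p q|s _].
- exact: wdeg_le0.
- exact: wdeg_leD.
- have -> : c *+ n = \sum_i (c + phi i - phi (s i)).
    rewrite big_split big_split /= sumr_const card_ord sumrN.
    by rewrite [\sum_i phi i](reindex_perm s) addrK.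
  case: (odd_perm s); rewrite ?expr1 ?expr0 ?mulN1r ?mul1r;
    [apply: wdeg_leN|]; apply: wdeg_le_prod => i; apply: hA.
Qed.

End WeightedDegree.

Lemma modn_small_succ a q : (a < q)%N -> (a.+1 %% q = if a.+1 == q then 0 else a.+1)%N.
Proof.
move=> ltaq; have [->|neq] := eqVneq a.+1 q; first exact: modnn.
by rewrite modn_small // ltn_neqAle neq.
Qed.

Lemma modn_small_pred a q : (a < q)%N -> ((a + q).-1 %% q = if a == 0 then q.-1 else a.-1)%N.
Proof.
move=> ltaq; have [->|/negPf a_neq0] := eqVneq a 0%N; first by rewrite modn_small; lia.
by rewrite -subn1 addnC -addnBA ?lt0n ?a_neq0 // modnDl modn_small ?subn1; lia.
Qed.

Section NewtonPolygon.
Variable R : realType.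
Variables (q1 q2 : nat) (V : int -> int -> R) (lam : R[i]).
Hypothesis q2_gt0 : (0 < q2)%N.

Lemma ltn_crd1 (k : 'I_(q1 * q2)) : (crd1 q2 k < q1)%N.
Proof. by rewrite ltn_divLR // mulnC. Qed.

Lemma ltn_crd2 (k : 'I_(q1 * q2)) : (crd2 q2 k < q2)%N.
Proof. exact: ltn_pmod. Qed.

Variables s1 s2 : int.
Hypotheses (s1_sign : (s1 == 1) || (s1 == -1)) (s2_sign : (s2 == 1) || (s2 == -1)).

Definition site_weight (k : 'I_(q1 * q2)) : int :=
  s1 * (crd1 q2 k)%:Z + s2 * (crd2 q2 k)%:Z.

Lemma scaled_entry_wdeg k l :
  wdeg_le (s1 * q1%:Z) (s2 * q2%:Z) (scaled_entry V lam k l)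
    (s1 * q1%:Z + s2 * q2%:Z + 1 + site_weight k - site_weight l).
Proof.
rewrite /scaled_entry /site_weight /pcst /pz1 /pz2.
repeat apply: wdeg_leD.
  have [<-|_] := eqVneq k l; last exact: wdeg_le0.
  eapply wdeg_leW; last first.
    by apply: wdeg_leM; [apply: wdeg_leM; [apply: wdeg_leC | apply: wdeg_leX] | apply: wdeg_leY].
  by rewrite addrK add0r lerDl.
all: move: (ltn_crd1 k) (ltn_crd1 l) (ltn_crd2 k) (ltn_crd2 l).
all: move: (crd1 q2 k) (crd1 q2 l) (crd2 q2 k) (crd2 q2 l) => a a' b b' lt_a _ lt_b _.
all: rewrite ?(modn_small_succ lt_a) ?(modn_small_pred lt_a).
all: rewrite ?(modn_small_succ lt_b) ?(modn_small_pred lt_b).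
all: case: ifP => [/andP[/eqP-> /eqP->]|_]; last exact: wdeg_le0.
(* A hop across the boundary of the fundamental domain carries an extra factor
   z_i^(+-1), whose weight makes up for the jump of the coordinate n_i by -+q_i. *)
all: case: eqP => wrap.
all: eapply wdeg_leW; last by repeat first [apply: wdeg_leM | apply: wdeg_leX | apply: wdeg_leY].
all: by case/orP: s1_sign => /eqP->; case/orP: s2_sign => /eqP->; lia.
Qed.

Lemma shiftedP_wdeg :
  wdeg_le (s1 * q1%:Z) (s2 * q2%:Z) (shiftedP q1 q2 V lam)
    ((s1 * q1%:Z + s2 * q2%:Z + 1) *+ (q1 * q2)).
Proof.
apply: (wdeg_le_det (phi := site_weight)) => k l.
by rewrite mxE; apply: scaled_entry_wdeg.
Qed.

Lemma Pcoef_halfplane e1 e2 :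
  Pcoef q1 q2 V lam e1 e2 != 0 -> s1 * q1%:Z * e1 + s2 * q2%:Z * e2 <= (q1 * q2)%N%:Z.
Proof.
rewrite /Pcoef; case: ifP => [/andP[e1Q_ge0 e2Q_ge0]|_]; last by rewrite eqxx.
move/shiftedP_wdeg; rewrite !gez0_abs //.
by case/orP: s1_sign => /eqP->; case/orP: s2_sign => /eqP->; lia.
Qed.

End NewtonPolygon.

Theorem corollary4p5 (R : realType) (q1 q2 : nat) (hq1 : (0 < q1)%N) (hq2 : (0 < q2)%N)
  (hcop : coprime q1 q2) (V : int -> int -> R) (hV : periodic q1 q2 V)
  (lam : R[i]%C) (e1 e2 : int) :
  z1dPcoef q1 q2 V lam e1 e2 != 0 -> in_N q1 q2 e1 e2.
Proof.
move=> z1dP_neq0.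
have P_neq0 : Pcoef q1 q2 V lam e1 e2 != 0.
  by apply: contraNneq z1dP_neq0; rewrite /z1dPcoef => ->; rewrite mulr0.
have halfplane := Pcoef_halfplane hq2 _ _ P_neq0.
have := halfplane 1 1 isT isT; have := halfplane 1 (-1) isT isT.
have := halfplane (-1) 1 isT isT; have := halfplane (-1) (-1) isT isT.
rewrite /in_N; lia.
Qed.
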